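(* There exists $n_0$ such that the following holds for every $n\geq n_0$. Let $G$ be a graph of order $n$ whose adjacency matrix has largest eigenvalue $\mu(G)$ satisfying $\mu(G)>\sqrt{\lfloor n^{2}/4\rfloor}$. Then $G$ contains a cycle of length $t$ for every integer $t$ with $3\leq t\leq n/320$.
   Context: Graphs are finite and simple. $\mu(G)$ denotes the largest eigenvalue of the adjacency matrix of $G$. *)

From HB Require Import structures.
From mathcomp Require Import all_boot all_order all_algebra.
From mathcomp Require Import reals.
Set Implicit Arguments. Unset Strict Implicit. Unset Printing Implicit Defensive.
Import Order.TTheory GRing.Theory Num.Theory.
Local Open Scope ring_scope.

Definition simple_graph (T : finType) (e : rel T) : Prop :=
  symmetric e /\ irreflexive e.

Definition adjmx (R : realType) (T : finType) (e : rel T) : 'M[R]_#|T| :=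
  \matrix_(i, j) (e (enum_val i) (enum_val j))%:R.

Definition largest_eigenvalue (R : realType) (m : nat) (A : 'M[R]_m) (mu : R) : Prop :=
  eigenvalue A mu /\ (forall l : R, eigenvalue A l -> l <= mu).

Definition has_cycle (T : finType) (e : rel T) (t : nat) : Prop :=
  exists s : seq T, size s = t /\ uniq s /\ cycle e s.

From HB Require Import structures.
From mathcomp Require Import all_boot all_order all_algebra.
From mathcomp Require Import reals.
From mathcomp Require Import zify.
From Stdlib Require Import Classical.
Set Implicit Arguments. Unset Strict Implicit. Unset Printing Implicit Defensive.

(* For an eigenvector v and a vertex u maximising |v_u|, mu^2|v_u| = |(A^2 v)_u| <= w|v_u|
   where w is the number of walks of length two from u; so w > n^2/4. Let S be the
   neighbourhood of u and d = |S|, and suppose G has no cycle of length t. A path on t-1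
   vertices in S would close into a t-cycle through u, so by a degeneracy argument G[S] has
   degree sum D <= 2td. Counting, w = D + (n-d)d - M where M is the number of non-edges
   between S and its complement, and (n-d)d <= n^2/4, so D > M; in particular d is close to
   n/2. We contradict this by showing D <= M. Call z outside S joined if it misses at most
   n/20 vertices of S. If fewer than n/10 vertices are joined, every other vertex of the
   complement contributes n/20 to M. Otherwise any two joined vertices (and u) have many
   common neighbours in S, giving paths u, s_1, z_1, s_2, z_2, ... that close into cycles
   of every even length, and of every odd length through an edge of S at a vertex with a
   joined neighbour. Hence t is odd and all edges of S lie in the set B of vertices of S
   without joined neighbours, so D <= |B|^2 while M >= |B| * #joined, and either bound
   suffices. *)

Definition nbhd (V : finType) (e : rel V) (v : V) : {set V} := [set w | e v w].

Definition paths_shorter (V : finType) (e : rel V) (A : {set V}) (k : nat) : Prop :=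
  forall s, sorted e s -> uniq s -> {subset s <= A} -> size s < k.

Definition degsum (V : finType) (e : rel V) (A : {set V}) : nat :=
  \sum_(w in A) #|nbhd e w :&: A|.

Lemma uniq_size_le_card (V : finType) (A : {set V}) (s : seq V) :
  uniq s -> {subset s <= A} -> size s <= #|A|.
Proof. by move=> us sA; rewrite cardE uniq_leq_size // => y /sA; rewrite mem_enum. Qed.

Lemma leq_sum_subset (V : finType) (A B : {set V}) (f : V -> nat) :
  A \subset B -> \sum_(v in A) f v <= \sum_(v in B) f v.
Proof. by move=> AB; rewrite [X in _ <= X](big_setID A) /= (setIidPr AB) leq_addr. Qed.

Lemma exists_uniq_seq_in (V : finType) (A : {set V}) (k : nat) :
  k <= #|A| -> exists zs : seq V, [/\ size zs = k, uniq zs & {subset zs <= A}].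
Proof.
move=> kA; exists (take k (enum A)); split.
- by rewrite size_takel // -cardE.
- by rewrite take_uniq ?enum_uniq.
- by move=> z /mem_take; rewrite mem_enum.
Qed.

Lemma card_nbhdI (V : finType) (e : rel V) (w : V) (A : {set V}) :
  #|nbhd e w :&: A| = \sum_(v in A) e w v.
Proof.
rewrite -sum1_card big_mkcond [RHS]big_mkcond /=.
by apply: eq_bigr => v _; rewrite !inE; case: (v \in A); case: (e w v).
Qed.

Section SimpleGraphs.

Variables (V : finType) (e : rel V).
Hypotheses (esym : symmetric e) (eirr : irreflexive e).

Lemma exists_saturated_path (A : {set V}) (x : V) (s : seq V) :
  path e x s -> uniq (x :: s) -> {subset x :: s <= A} ->
  exists y s', [/\ path e y s', uniq (y :: s'), {subset y :: s' <= A} &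
                  {subset nbhd e y :&: A <= s'}].
Proof.
move: {2}(#|A| - size s) (leqnn (#|A| - size s)) => m.
elim: m x s => [|m IH] x s hm hs hu hA; have := uniq_size_le_card hu hA => /= hsz.
  by lia.
case: (pickP [pred w | (w \in A) && e x w && (w \notin x :: s)]) => [w|sat].
  move=> /= /andP[/andP[wA exw] ws].
  apply: (IH w (x :: s)); first by rewrite /=; lia.
  - by rewrite /= esym exw.
  - by rewrite /= ws.
  - by move=> y; rewrite inE => /orP[/eqP->//|]; apply: hA.
exists x, s; split=> // w; rewrite !inE => /andP[exw wA].
move: (sat w); rewrite /= wA exw /= inE negb_or => /negbT.
by rewrite negb_and !negbK => /orP[/eqP wx|//]; rewrite wx eirr in exw.
Qed.

(* The end of a saturated path has all its A-neighbours on the rest of the path. *)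
Lemma paths_shorter_low_degree (A : {set V}) (k : nat) (x : V) :
  paths_shorter e A k -> x \in A -> exists2 y, y \in A & #|nbhd e y :&: A| <= k - 2.
Proof.
move=> short xA.
have [//|//||y [s [hs hu hA sat]]] := @exists_saturated_path A x [::].
  by move=> z; rewrite inE => /eqP->.
exists y; first by apply: hA; rewrite inE eqxx.
have := short (y :: s) hs hu hA; have := card_size s.
have : #|nbhd e y :&: A| <= #|s| by apply/subset_leq_card/subsetP.
by rewrite /=; lia.
Qed.

Lemma degsum_setD1 (A : {set V}) (y : V) :
  y \in A -> degsum e A = degsum e (A :\ y) + 2 * #|nbhd e y :&: (A :\ y)|.
Proof.
move=> yA; rewrite /degsum (big_setD1 _ yA) /=.
under eq_bigr => w _ do rewrite card_nbhdI (big_setD1 _ yA) /=.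
under [in RHS]eq_bigr => w _ do rewrite card_nbhdI.
rewrite card_nbhdI (big_setD1 _ yA) /= eirr big_split card_nbhdI /=.
have -> : \sum_(w in A :\ y) (e w y : nat) = \sum_(v in A :\ y) (e y v : nat).
  by apply: eq_bigr => w _; rewrite esym.
lia.
Qed.

(* Degeneracy: delete a vertex of degree at most k - 2 and induct. *)
Lemma degsum_paths_shorter (A : {set V}) (k : nat) :
  paths_shorter e A k -> degsum e A <= 2 * (k - 2) * #|A|.
Proof.
move: {2}#|A| (leqnn #|A|) => n; elim: n A => [|n IH] A hn short.
  by move: hn; rewrite leqn0 cards_eq0 => /eqP->; rewrite /degsum big_set0.
have [->|[x xA]] := set_0Vmem A; first by rewrite /degsum big_set0.
have [y yA hy] := paths_shorter_low_degree short xA.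
have hAy : #|A| = #|A :\ y|.+1 by rewrite (cardsD1 y A) yA.
have IHy : degsum e (A :\ y) <= 2 * (k - 2) * #|A :\ y|.
  apply: IH; first by lia.
  by move=> s hs hu hsub; apply: short => // z /hsub /setD1P[].
have : #|nbhd e y :&: (A :\ y)| <= #|nbhd e y :&: A|.
  by apply/subset_leq_card/setIS/subD1set.
rewrite (degsum_setD1 yA); nia.
Qed.

Lemma degsum_le_sq_of_edges_in (A B : {set V}) :
  (forall a b, a \in A -> b \in A -> e a b -> a \in B) -> degsum e A <= #|B| * #|B|.
Proof.
move=> inB.
have hw w : w \in A -> #|nbhd e w :&: A| <= (w \in B) * #|B|.
  move=> wA; case: (boolP (w \in B)) => wB; rewrite (mul1n, mul0n).
    apply/subset_leq_card/subsetP => x /setIP[]; rewrite inE esym => exw xA.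
    exact: inB exw.
  rewrite leqn0 cards_eq0; apply/eqP/setP => x; rewrite !inE.
  by apply/negbTE; apply: contra wB => /andP[ewx xA]; apply: inB ewx.
rewrite /degsum; apply: (leq_trans (leq_sum _ hw)).
rewrite -sum_nat_const big_mkcond [leqRHS]big_mkcond.
by apply: leq_sum => w _; case: (w \in A); case: (w \in B); rewrite ?mul1n.
Qed.

Lemma nbhd_path_cycle (u : V) (s : seq V) :
  s != [::] -> sorted e s -> uniq s -> {subset s <= nbhd e u} -> has_cycle e (size s).+1.
Proof.
case: s => [//|x p] _ hs hu hS.
exists [:: u, x & p]; split; [done|split].
  by rewrite cons_uniq hu andbT; apply/negP => /hS; rewrite inE eirr.
rewrite /cycle /= rcons_path (hs : path e x p).
have := hS x (mem_head x p); rewrite inE => ->.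
by have := hS _ (mem_last x p); rewrite inE esym => ->.
Qed.

End SimpleGraphs.

Section AlmostJoined.

Variables (V : finType) (e : rel V).
Hypotheses (esym : symmetric e) (eirr : irreflexive e).

Definition almost_joined (S : {set V}) (g : nat) (z : V) : bool :=
  (z \notin S) && (#|S :\: nbhd e z| <= g).

Lemma almost_joined_center (u : V) (g : nat) : almost_joined (nbhd e u) g u.
Proof. by rewrite /almost_joined inE eirr setDv cards0. Qed.

Lemma almost_joined_common_nbhd (S Av : {set V}) (g : nat) (z z' : V) :
  almost_joined S g z -> almost_joined S g z' -> #|Av| + 2 * g < #|S| ->
  exists s, [/\ s \in S, s \notin Av, e z s & e z' s].
Proof.
move=> /andP[_ gz] /andP[_ gz'] hc.
set C := S :\: ((S :\: nbhd e z) :|: (S :\: nbhd e z') :|: Av).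
have : 0 < #|C|.
  rewrite /C cardsD.
  have := subset_leq_card (subsetIr S ((S :\: nbhd e z) :|: (S :\: nbhd e z') :|: Av)).
  have := (leq_card_setU (S :\: nbhd e z :|: S :\: nbhd e z') Av).1.
  have := (leq_card_setU (S :\: nbhd e z) (S :\: nbhd e z')).1.
  by lia.
case/card_gt0P => s; rewrite !inE; case sS: (s \in S); last by rewrite !andbF.
by rewrite !andbT !negb_or !negbK => /andP[/andP[h1 h2] h3]; exists s.
Qed.

(* q = [:: s_1, z_1, s_2, z_2, ...] where s_i is a common neighbour of z_(i-1) and z_i in S
   chosen outside Av and the previously chosen s_j. *)
Lemma almost_joined_path (S : {set V}) (g : nat) (zs : seq V) (z : V) (Av : {set V}) :
  all (almost_joined S g) (z :: zs) -> uniq (z :: zs) -> #|Av| + size zs + 2 * g < #|S| ->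
  exists q, [/\ path e z q, uniq (z :: q), last z q = last z zs, size q = 2 * size zs &
     forall w, w \in q -> (w \in zs) || ((w \in S) && (w \notin Av))].
Proof.
elim: zs z Av => [|z' zs IH] z Av hg hu hc; first by exists [::].
have /and3P[gz gz' gzs] := hg.
have hc' : #|Av| + 2 * g < #|S| by rewrite /= in hc; lia.
have [s [sS sAv ezs ez's]] := almost_joined_common_nbhd gz gz' hc'.
have [|||q [hs hq hl hsz hm]] := IH z' (s |: Av).
- by case/andP: hg.
- by case/andP: hu.
- apply: leq_ltn_trans hc; rewrite /= addnS -addSn !leq_add2r.
  by rewrite cardsU1 -add1n leq_add2r leq_b1.
have notS w : almost_joined S g w -> w \in S = false by case/andP=> /negPf.
exists [:: s, z' & q]; split.
- by rewrite /= ezs esym ez's.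
- move: hu hq; rewrite /= !inE => /andP[/norP[zz' zzs] /andP[z'zs _]] /andP[z'q ->].
  rewrite z'q !andbT !negb_or; apply/andP; split; first (apply/and3P; split).
  + by apply: contraTneq sS => <-; rewrite notS.
  + exact: zz'.
  + by apply/negP => /hm /orP[/(negP zzs)//|/andP[]]; rewrite notS.
  apply/andP; split; first by apply: contraTneq sS => ->; rewrite notS.
  apply/negP => /hm /orP[szs|/andP[_]]; last by rewrite !inE eqxx.
  by move: gzs => /allP /(_ _ szs); rewrite /almost_joined sS.
- by rewrite /= hl.
- by rewrite /= hsz mulnS add2n.
- move=> w; rewrite !inE => /orP[/eqP->|/orP[/eqP->|/hm]]; first by rewrite sS sAv orbT.
    by rewrite eqxx.
  by case/orP=> [->|/andP[-> ]]; rewrite ?orbT // !inE negb_or => /andP[_ ->]; rewrite orbT.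
Qed.

Lemma even_cycle_of_almost_joined (u : V) (g : nat) (zs : seq V) :
  all (almost_joined (nbhd e u) g) zs -> uniq (u :: zs) ->
  1 + size zs + 2 * g < #|nbhd e u| -> has_cycle e (2 * size zs + 2).
Proof.
move=> hg hu hc.
have gu := almost_joined_center u g.
have gl : almost_joined (nbhd e u) g (last u zs).
  by have := mem_last u zs; rewrite inE => /orP[/eqP->//|/(allP hg)].
have hc0 : #|@set0 V| + 2 * g < #|nbhd e u| by rewrite cards0; lia.
have [s [sS _ eus els]] := almost_joined_common_nbhd gu gl hc0.
have [|||q [hs hq hl hsz hm]] := @almost_joined_path (nbhd e u) g zs u [set s].
- by rewrite /= gu hg.
- done.
- by rewrite cards1; lia.
exists [:: s, u & q]; split; first by rewrite /= hsz addn2.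
split; last by rewrite /cycle /= rcons_path hs esym eus /= hl.
rewrite cons_uniq hq andbT inE negb_or; apply/andP; split.
  by apply: contraTneq sS => ->; rewrite inE eirr.
apply/negP => /hm /orP[szs|/andP[_]]; last by rewrite inE eqxx.
by move: (allP hg _ szs) => /andP[]; rewrite sS.
Qed.

Lemma odd_cycle_of_almost_joined (u : V) (g : nat) (a b : V) (zs : seq V) :
  a \in nbhd e u -> b \in nbhd e u -> e a b -> e a (last u zs) ->
  all (almost_joined (nbhd e u) g) zs -> uniq (u :: zs) ->
  2 + size zs + 2 * g < #|nbhd e u| -> has_cycle e (2 * size zs + 3).
Proof.
move=> aS bS eab eal hg hu hc.
have gu := almost_joined_center u g.
have [|||q [hs hq hl hsz hm]] := @almost_joined_path (nbhd e u) g zs u [set a; b].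
- by rewrite /= gu hg.
- done.
- by rewrite cards2; case: (a != b) => /=; lia.
have fresh c : c \in nbhd e u -> c \in [set a; b] -> c \notin u :: q.
  move=> cS cab; rewrite inE negb_or; apply/andP; split.
    by apply: contraTneq cS => ->; rewrite inE eirr.
  apply/negP => /hm /orP[czs|/andP[_]]; last by rewrite cab.
  by move: (allP hg _ czs) => /andP[]; rewrite cS.
exists [:: a, b, u & q]; split; first by rewrite /= hsz addn3.
split.
  have fa : a \notin u :: q by apply: fresh; rewrite // !inE eqxx.
  have fb : b \notin u :: q by apply: fresh; rewrite // !inE eqxx orbT.
  rewrite cons_uniq in_cons negb_or fa cons_uniq fb hq !andbT.
  by apply: contraTneq eab => ->; rewrite eirr.
move: bS; rewrite inE => eub.
by rewrite /cycle /= rcons_path hs eab esym eub /= hl esym.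
Qed.

End AlmostJoined.

Lemma subn_mul_le_quarter (n d : nat) : d <= n -> (n - d) * d <= n * n %/ 4.
Proof.
move=> dn; rewrite leq_divRL // -{2 3}(subnK dn); move: (n - d) => m.
have : 0 <= (m - d) * (m - d) + (d - m) * (d - m) by [].
nia.
Qed.

(* (n - d) d stays below 0.24 n^2 outside 2n/5 < d < 3n/5, and 2td <= nd/160 cannot
   make up the difference to n^2/4. *)
Lemma nbhd_size_window (n d t : nat) : 320 * t <= n -> d <= n ->
  n * n %/ 4 < (n - d) * d + 2 * t * d -> 2 * n < 5 * d /\ 5 * d < 3 * n.
Proof.
move=> tn dn; rewrite ltn_divLR // => hq.
have htd : 160 * (2 * t * d) <= n * d by nia.
split; rewrite ltnNge; apply/negP => hd.
  nia.
nia.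
Qed.

Lemma few_joined_bound (n d t g c : nat) : 320 * t <= n -> 5 * d < 3 * n ->
  10 * g < n -> n < 20 * c.+1 -> 2 * t * d <= (n - d - (1 + g)) * c.+1.
Proof.
move=> tn hd hg hc.
have hm : 3 * n <= 10 * (n - d - (1 + g)) + 7 by lia.
nia.
Qed.

Lemma many_joined_bound (n d t g b : nat) : 320 * t <= n -> d <= n ->
  n <= 10 * g -> g < b -> 2 * t * d <= g * b.
Proof.
move=> tn dn hg hb.
have h1 : n * n <= 100 * (g * b) by nia.
nia.
Qed.

Section NeighbourhoodCounting.

Variables (V : finType) (e : rel V) (u : V) (t : nat).
Hypotheses (esym : symmetric e) (eirr : irreflexive e).
Hypotheses (t3 : 3 <= t) (tn : 320 * t <= #|V|) (no_cycle : ~ has_cycle e t).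

Local Notation S := (nbhd e u).
Local Notation n := #|V|.
Local Notation d := #|S|.

Let missing := \sum_(v in ~: S) #|S :\: nbhd e v|.

Lemma nbhd_paths_shorter : paths_shorter e S (t - 1).
Proof.
move=> s hs hu hS; rewrite ltnNge; apply/negP => hsz; apply: no_cycle.
have -> : t = (size (take (t - 1) s)).+1 by rewrite size_takel //; lia.
apply: (nbhd_path_cycle esym eirr (u := u)).
- by rewrite -size_eq0 size_takel //; lia.
- exact: take_sorted.
- exact: take_uniq.
- by move=> x /mem_take /hS.
Qed.

Lemma degsum_nbhd_le : degsum e S <= 2 * t * d.
Proof.
apply: leq_trans (degsum_paths_shorter esym eirr nbhd_paths_shorter) _.
by rewrite leq_mul2r leq_mul2l -subnDA leq_subr !orbT.
Qed.

Lemma two_walks_nbhd : \sum_(w in S) #|nbhd e w| + missing = degsum e S + (n - d) * d.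
Proof.
have cross : \sum_(w in S) #|nbhd e w :\: S| = \sum_(v in ~: S) #|nbhd e v :&: S|.
  under eq_bigr => w _ do rewrite setDE card_nbhdI.
  rewrite exchange_big /=; apply: eq_bigr => v _; rewrite card_nbhdI.
  by apply: eq_bigr => w _; rewrite esym.
have -> : n - d = #|~: S| by rewrite -(cardsC S) addKn.
rewrite /degsum /missing -sum_nat_const.
under eq_bigr => w _ do rewrite -(cardsID S (nbhd e w)).
rewrite big_split /= cross -addnA -big_split /=; congr (_ + _).
by apply: eq_bigr => v _; rewrite setIC cardsID.
Qed.

Hypothesis many_walks : n * n %/ 4 < \sum_(w in S) #|nbhd e w|.

Lemma nbhd_size_bounds : 2 * n < 5 * d /\ 5 * d < 3 * n.
Proof.
apply: nbhd_size_window tn (max_card _) _.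
apply: (leq_trans many_walks); have := two_walks_nbhd; have := degsum_nbhd_le; lia.
Qed.

Let gamma := n %/ 20.

Let joined := [set z | almost_joined e S gamma z & z != u].

Lemma joined_almost_joined z : z \in joined -> almost_joined e S gamma z.
Proof. by rewrite inE => /andP[]. Qed.

Lemma joined_notin_nbhd z : z \in joined -> z \notin S.
Proof. by move/joined_almost_joined/andP=> []. Qed.

Lemma degsum_le_missing_few_joined : 10 * #|joined| < n -> degsum e S <= missing.
Proof.
move=> few; set far := ~: S :\: (u |: joined).
have far_missing v : v \in far -> gamma.+1 <= #|S :\: nbhd e v|.
  rewrite !inE negb_or => /andP[/andP[vu vJ] vS]; move: vJ.
  by rewrite /almost_joined inE vS vu andbT /= -ltnNge.
have far_card : n - d - (1 + #|joined|) <= #|far|.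
  rewrite /far cardsD; have := cardsC S.
  have := subset_leq_card (subsetIr (~: S) (u |: joined)).
  by have := cardsU1 u joined; case: (u \notin joined) => /=; lia.
apply: (leq_trans degsum_nbhd_le); apply: leq_trans (_ : #|far| * gamma.+1 <= missing).
  apply: leq_trans (leq_mul far_card (leqnn _)).
  apply: few_joined_bound => //; first by case: nbhd_size_bounds.
  by rewrite /gamma; have := ltn_pmod n (isT : 0 < 20); have := divn_eq n 20; lia.
rewrite -sum_nat_const; apply: leq_trans (leq_sum _ far_missing) _.
by apply: leq_sum_subset; apply: subsetDl.
Qed.

Lemma joined_path_room k : 2 * k <= t -> 2 + k + 2 * gamma < d.
Proof. by have := nbhd_size_bounds; have := divn_eq n 20; rewrite /gamma; lia. Qed.

Lemma joined_uniq_cons zs : uniq zs -> {subset zs <= joined} -> uniq (u :: zs).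
Proof.
by move=> zsu zsJ; rewrite /= zsu andbT; apply/negP => /zsJ; rewrite inE eqxx andbF.
Qed.

Lemma joined_all zs : {subset zs <= joined} -> all (almost_joined e S gamma) zs.
Proof. by move=> zsJ; apply/allP => z /zsJ /joined_almost_joined. Qed.

Lemma joined_seq_ending y k : y \in joined -> k < #|joined| ->
  exists zs, [/\ size zs = k.+1, uniq zs, {subset zs <= joined} & last u zs = y].
Proof.
move=> yJ kJ; have : k <= #|joined :\ y| by rewrite (cardsD1 y) yJ in kJ.
case/exists_uniq_seq_in => ws [wsz wsu wsJ].
exists (rcons ws y); split; first by rewrite size_rcons wsz.
- by rewrite rcons_uniq wsu andbT; apply/negP => /wsJ /setD1P[]; rewrite eqxx.
- by move=> z; rewrite mem_rcons inE => /orP[/eqP->//|/wsJ /setD1P[]].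
- exact: last_rcons.
Qed.

Lemma many_joined_odd : n <= 10 * #|joined| -> odd t.
Proof.
move=> many; apply/negPn/negP => even; set j := (t./2).-1.
have tj : t = 2 * j + 2 by have := odd_double_half t; rewrite (negbTE even) /j; lia.
have [zs [zsz zsu zsJ]] := @exists_uniq_seq_in _ joined j ltac:(lia).
apply: no_cycle; rewrite tj -zsz.
apply: (even_cycle_of_almost_joined esym eirr (joined_all zsJ) (joined_uniq_cons zsu zsJ)).
by rewrite zsz; apply/ltnW/joined_path_room; rewrite tj leq_addr.
Qed.

Let isolated := [set s in S | [forall z in joined, ~~ e s z]].

Lemma nbhd_edge_isolated a b : odd t -> n <= 10 * #|joined| ->
  a \in S -> b \in S -> e a b -> a \in isolated.
Proof.
move=> odd_t many aS bS eab; rewrite inE aS /=; apply/forall_inP => y yJ; apply/negP => eay.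
have eau : e a u by move: aS; rewrite inE esym.
set j := (t./2).-1.
have tj : t = 2 * j + 3 by have := odd_double_half t; rewrite odd_t /j; lia.
have [zs [zsz zsu zsJ zsl]] : exists zs, [/\ size zs = j, uniq zs, {subset zs <= joined}
                                              & e a (last u zs)].
  case: j tj => [|j] tj; first by exists [::].
  have [zs [zsz zsu zsJ zsl]] := @joined_seq_ending y j yJ ltac:(lia).
  by exists zs; rewrite zsl.
apply: no_cycle; rewrite tj -zsz.
apply: (odd_cycle_of_almost_joined esym eirr aS bS eab zsl (joined_all zsJ)).
  exact: joined_uniq_cons.
by rewrite zsz; apply: joined_path_room; rewrite tj leq_addr.
Qed.

Lemma degsum_le_missing_many_joined : odd t -> n <= 10 * #|joined| -> degsum e S <= missing.
Proof.
move=> odd_t many.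
have hsq : degsum e S <= #|isolated| * #|isolated|.
  by apply: degsum_le_sq_of_edges_in => // a b aS bS; apply: nbhd_edge_isolated.
have hmiss : #|joined| * #|isolated| <= missing.
  have iso_missing v : v \in joined -> #|isolated| <= #|S :\: nbhd e v|.
    move=> vJ; apply/subset_leq_card/subsetP => s /setIdP[sS /forall_inP noJ].
    by rewrite in_setD sS andbT inE esym; apply: noJ.
  rewrite -sum_nat_const; apply: leq_trans (leq_sum _ iso_missing) _.
  by apply: leq_sum_subset; apply/subsetP => v /joined_notin_nbhd; rewrite in_setC.
have [small|large] := leqP #|isolated| #|joined|.
  by apply: leq_trans hsq (leq_trans _ hmiss); rewrite leq_mul2r small orbT.
apply: leq_trans degsum_nbhd_le (leq_trans _ hmiss).
exact: many_joined_bound tn (max_card _) many large.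
Qed.

Lemma degsum_nbhd_le_missing : degsum e S <= missing.
Proof.
have [few|many] := ltnP (10 * #|joined|) n; first exact: degsum_le_missing_few_joined.
exact: degsum_le_missing_many_joined (many_joined_odd many) many.
Qed.

Lemma nbhd_counting_contradiction : False.
Proof.
have := two_walks_nbhd; have := degsum_nbhd_le_missing.
by have := subn_mul_le_quarter (max_card S); have := many_walks; lia.
Qed.

End NeighbourhoodCounting.

Lemma cycle_of_many_two_walks (V : finType) (e : rel V) (u : V) (t : nat) :
  symmetric e -> irreflexive e -> 3 <= t -> 320 * t <= #|V| ->
  #|V| * #|V| %/ 4 < \sum_(w in nbhd e u) #|nbhd e w| -> has_cycle e t.
Proof.
move=> esym eirr t3 tn many; apply: NNPP => no_cycle.
exact: (nbhd_counting_contradiction esym eirr t3 tn no_cycle many).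
Qed.

Import Order.TTheory GRing.Theory Num.Theory.

Section Spectral.

Local Open Scope ring_scope.

(* Evaluate |v A| >= |mu| |v| at a coordinate j where |v| is maximal. *)
Lemma eigenvalue_le_colsum (R : realDomainType) (N : nat) (A : 'M[R]_N) (mu : R)
    (v : 'rV[R]_N) :
  (forall i j, 0 <= A i j) -> v *m A = mu *: v -> v != 0 ->
  exists j, `|mu| <= \sum_i A i j.
Proof.
move=> A0 hv v0.
have /existsP[i0 vi0] : [exists i, v 0 i != 0].
  apply: contraR v0 => /existsPn vz; apply/eqP/rowP => i; rewrite mxE.
  exact/eqP/negPn/vz.
set x := fun i => `|v 0 i|.
have [j _ xmax] := arg_maxP x (isT : predT i0).
exists j.
have xj : 0 < x j by apply: lt_le_trans (xmax i0 isT); rewrite normr_gt0.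
rewrite -(ler_pM2r xj).
have -> : `|mu| * x j = `|(v *m A) 0 j| by rewrite hv mxE normrM.
rewrite mxE mulr_suml; apply: le_trans (ler_norm_sum _ _ _) _.
apply: ler_sum => i _; rewrite normrM (ger0_norm (A0 _ _)) mulrC.
by apply: ler_wpM2l; [exact: A0 | exact: xmax].
Qed.

Lemma adjmx_sqr_colsum (R : realType) (T : finType) (e : rel T) (j : 'I_#|T|) :
  symmetric e ->
  \sum_i (adjmx R e *m adjmx R e) i j = (\sum_(w in nbhd e (enum_val j)) #|nbhd e w|)%:R.
Proof.
move=> esym.
have sum_enum (F : T -> R) : \sum_w F w = \sum_(k < #|T|) F (enum_val k).
  by rewrite (reindex _ (onW_bij _ (@enum_val_bij T))).
have deg y : #|nbhd e y|%:R = \sum_(i < #|T|) (e (enum_val i) y)%:R :> R.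
  rewrite -sum1_card natr_sum big_mkcond sum_enum.
  by apply: eq_bigr => i _; rewrite inE esym; case: (e _ _).
rewrite natr_sum [RHS]big_mkcond sum_enum /=.
under eq_bigr => i _ do rewrite mxE.
rewrite exchange_big /=; apply: eq_bigr => k _.
rewrite -mulr_suml inE deg [adjmx R e k j]mxE esym.
case: (e (enum_val j) (enum_val k)); rewrite ?mulr1 ?mulr0 //.
by apply: eq_bigr => i _; rewrite mxE.
Qed.

End Spectral.

Theorem theorem1 :
  exists n0 : nat, forall (R : realType) (n : nat), (n0 <= n)%N ->
  forall (T : finType) (e : rel T), simple_graph e -> #|T| = n ->
  forall mu : R, largest_eigenvalue (adjmx R e) mu ->
  (Num.sqrt (((n * n) %/ 4)%N%:R : R) < mu)%R ->
  forall t : nat, (3 <= t)%N -> (320 * t <= n)%N -> has_cycle e t.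
Proof.
exists 0 => R n _ T e [esym eirr] <- mu [mu_eig _] mu_big t t3 tn.
have mu_pos : (0 < mu)%R := le_lt_trans (sqrtr_ge0 _) mu_big.
have [v hv v0] := eigenvalueP mu_eig.
have hv2 : (v *m (adjmx R e *m adjmx R e) = mu ^+ 2 *: v)%R.
  by rewrite mulmxA hv -scalemxAl hv scalerA -expr2.
have A0 i j : (0 <= (adjmx R e *m adjmx R e) i j)%R.
  by rewrite mxE sumr_ge0 // => k _; rewrite !mxE mulr_ge0.
have [j hj] := eigenvalue_le_colsum A0 hv2 v0.
apply: (@cycle_of_many_two_walks _ e (enum_val j) t esym eirr t3 tn).
rewrite -(ltr_nat R) -adjmx_sqr_colsum //; apply: lt_le_trans hj.
by rewrite ger0_norm ?sqr_ge0 // -ltr_sqrt ?exprn_gt0 // sqrtr_sqr gtr0_norm.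
Qed.
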